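(* Let $A, B, P$ be points in the Euclidean plane and $r>0$ a number with $|AP|>r$ and $|BP|>r$. Consider the maximum angle problem: find a point $P^*$ with $|PP^*|=r$ maximizing the angle $\angle AP^*B\in[0,\pi]$. This problem can be solved using a quadratic equation; that is, a maximizing point $P^*$ exists and its coordinates can be obtained from the coordinates of $A$, $B$, $P$ and from $r$ by finitely many field operations and square roots.
   Context: Here $\angle AQB\in[0,\pi]$ denotes the non-reflex angle at $Q$ between rays $QA$ and $QB$. *)

From Stdlib Require Import Reals.
Open Scope R_scope.

Definition point := (R * R)%type.

Definition edist (X Y : point) : R :=
  sqrt ((fst X - fst Y) ^ 2 + (snd X - snd Y) ^ 2).

(* Non-reflex angle AQB in [0, PI], between rays QA and QB
   (meaningful when Q <> A and Q <> B). *)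
Definition angle (A Q B : point) : R :=
  acos (((fst A - fst Q) * (fst B - fst Q) + (snd A - snd Q) * (snd B - snd Q))
        / (edist Q A * edist Q B)).

Inductive constructible (S : R -> Prop) : R -> Prop :=
| cst_base : forall x, S x -> constructible S x
| cst_0 : constructible S 0
| cst_1 : constructible S 1
| cst_add : forall x y, constructible S x -> constructible S y -> constructible S (x + y)
| cst_opp : forall x, constructible S x -> constructible S (- x)
| cst_mul : forall x y, constructible S x -> constructible S y -> constructible S (x * y)
| cst_inv : forall x, constructible S x -> x <> 0 -> constructible S (/ x)
| cst_sqrt : forall x, constructible S x -> 0 <= x -> constructible S (sqrt x).

(* Translate [P] to the origin.  With [d q = (a - q).(b - q)] and [w q = (a - q) x (b - q)],
   the cosine of the angle [A q B] is [d / sqrt (d^2 + w^2)], a continuous function on the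
   circle, so a minimiser [p] of the cosine exists by compactness.  If [w p = 0], [p] lies on
   the line [AB].  Otherwise, comparing [p] with its rational rotations by [2 atan t] for
   small [t] yields the Lagrange condition; together with the circle equation it puts [p] on
   a line with constructible coefficients.  A line meets the circle in points computed with
   one square root. *)

From Stdlib Require Import Reals Lra Psatz.
From Coquelicot Require Import Coquelicot.
Open Scope R_scope.

Lemma sum_sqr_pos x y : x <> 0 \/ y <> 0 -> 0 < x^2 + y^2.
Proof.
  pose proof (pow2_ge_0 x); pose proof (pow2_ge_0 y).
  intros [Hx|Hy]; [pose proof (Rsqr_pos_lt _ Hx)|pose proof (Rsqr_pos_lt _ Hy)]; unfold Rsqr in *; nra.
Qed.
Lemma sqr_dist_pos_of_circle r q1 q2 a1 a2 :
  q1^2 + q2^2 = r^2 -> r^2 < a1^2 + a2^2 -> 0 < (q1 - a1)^2 + (q2 - a2)^2.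
Proof.
  intros Hq Ha. apply sum_sqr_pos.
  destruct (Req_dec q1 a1) as [->|]; [destruct (Req_dec q2 a2) as [->|]|]; [lra|right|left]; lra.
Qed.

Lemma quadratic_pos_near_0 c0 c1 c2 :
  0 < c0 -> exists delta, 0 < delta /\
  forall t, Rabs t < delta -> 0 < c0 + c1 * t + c2 * t^2.
Proof.
  intros Hc0.
  set (M := 1 + Rabs c1 + Rabs c2).
  assert (HM : 1 <= M) by (unfold M; pose proof (Rabs_pos c1); pose proof (Rabs_pos c2); lra).
  exists (Rmin 1 (c0 / (2 * M))). split.
  - apply Rmin_pos; [lra|]. apply Rdiv_lt_0_compat; lra.
  - intros t Ht.
    assert (Ht1 : Rabs t < 1) by (pose proof (Rmin_l 1 (c0 / (2 * M))); lra).
    assert (HtM : Rabs t * (2 * M) < c0).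
    { pose proof (Rmin_r 1 (c0 / (2 * M))).
      apply (Rmult_lt_compat_r (2 * M)) in Ht; [|lra].
      assert (c0 / (2 * M) * (2 * M) = c0) by (field; lra). nra. }
    pose proof (Rabs_pos t).
    assert (Hsq : t^2 <= Rabs t) by (rewrite <- (pow2_abs t); nra).
    assert (- (Rabs c1 * Rabs t) <= c1 * t)
      by (rewrite <- Rabs_mult; pose proof (Rle_abs (- (c1 * t))); rewrite Rabs_Ropp in *; lra).
    assert (- (Rabs c2 * Rabs t) <= c2 * t^2).
    { pose proof (Rabs_pos c2). pose proof (Rle_abs (- c2)). rewrite Rabs_Ropp in *.
      pose proof (pow2_ge_0 t). nra. }
    unfold M in HtM. nra.
Qed.

Lemma stationary_of_nonneg_near_0 alpha beta delta :
  0 < delta -> (forall t, Rabs t < delta -> 0 <= t * (alpha * t - beta)) -> beta = 0.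
Proof.
  intros Hd H.
  set (eps := Rmin (/ (2 * (1 + Rabs alpha))) (delta / (2 * (1 + Rabs beta)))).
  pose proof (Rabs_pos alpha). pose proof (Rabs_pos beta).
  assert (He : 0 < eps).
  { apply Rmin_pos; [apply Rinv_0_lt_compat; lra|apply Rdiv_lt_0_compat; lra]. }
  assert (Hae : alpha * eps < 1).
  { pose proof (Rmin_l (/ (2 * (1 + Rabs alpha))) (delta / (2 * (1 + Rabs beta)))) as Heps.
    assert (Rabs alpha * / (2 * (1 + Rabs alpha)) < 1)
      by (apply (Rmult_lt_reg_r (2 * (1 + Rabs alpha))); [lra|field_simplify; lra]).
    pose proof (Rle_abs alpha). fold eps in Heps. nra. }
  assert (Ht : Rabs (beta * eps) < delta).
  { pose proof (Rmin_r (/ (2 * (1 + Rabs alpha))) (delta / (2 * (1 + Rabs beta)))) as Heps.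
    fold eps in Heps. rewrite Rabs_mult, (Rabs_pos_eq eps) by lra.
    assert (Rabs beta * (delta / (2 * (1 + Rabs beta))) < delta)
      by (apply (Rmult_lt_reg_r (2 * (1 + Rabs beta))); [lra|field_simplify; nra]).
    nra. }
  specialize (H _ Ht).
  assert (E : beta * eps * (alpha * (beta * eps) - beta) = beta^2 * eps * (alpha * eps - 1)) by ring.
  rewrite E in H.
  assert (0 <= beta^2) by apply pow2_ge_0.
  assert (beta^2 * eps <= 0) by nra.
  assert (beta^2 = 0) by nra. nra.
Qed.

Lemma mul_sub_nonneg_of_same_sign u v x y :
  0 < u * v -> x * Rabs u >= y * Rabs v -> 0 <= u * (x * u - y * v).
Proof.
  intros Huv H.
  destruct (Rlt_dec 0 u).
  - assert (0 < v) by nra. rewrite !Rabs_pos_eq in H by lra. nra.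
  - assert (u < 0) by (destruct (Req_dec u 0); [subst; lra|lra]).
    assert (v < 0) by nra. rewrite !Rabs_left in H by lra. nra.
Qed.

Section Constructible.
Variable S : R -> Prop.
Notation Cn := (constructible S).

Lemma constructible_sub x y : Cn x -> Cn y -> Cn (x - y).
Proof. intros; apply cst_add, cst_opp; assumption. Qed.

Lemma constructible_div x y : Cn x -> Cn y -> y <> 0 -> Cn (x / y).
Proof. intros; apply cst_mul, cst_inv; assumption. Qed.

Lemma constructible_pow x n : Cn x -> Cn (x ^ n).
Proof. intros; induction n; [apply cst_1|apply cst_mul; assumption]. Qed.

Lemma constructible_2 : Cn 2.
Proof. replace 2 with (1 + 1) by ring; apply cst_add; apply cst_1. Qed.

Lemma constructible_of_sqr x : Cn (x^2) -> Cn x.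
Proof.
  intros Hx.
  assert (Hs : Cn (sqrt (x^2))) by (apply cst_sqrt; [assumption|apply pow2_ge_0]).
  assert (E : sqrt (x^2) = Rabs x) by (rewrite <- Rsqr_pow2; apply sqrt_Rsqr_abs).
  destruct (Rcase_abs x).
  - replace x with (- sqrt (x^2)) by (rewrite E, Rabs_left; lra). apply cst_opp; assumption.
  - replace x with (sqrt (x^2)) by (rewrite E, Rabs_right; lra). assumption.
Qed.

End Constructible.

Ltac constructible := repeat match goal with
 | |- constructible _ _ => assumption
 | |- constructible _ (_ + _) => apply cst_add
 | |- constructible _ (_ - _) => apply constructible_sub
 | |- constructible _ (- _) => apply cst_opp
 | |- constructible _ (_ * _) => apply cst_mul
 | |- constructible _ (_ / _) => apply constructible_div
 | |- constructible _ (_ ^ _) => apply constructible_pow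
 | |- constructible _ 0 => apply cst_0
 | |- constructible _ 1 => apply cst_1
 | |- constructible _ 2 => apply constructible_2
end.

Definition on_constructible_line S p1 p2 := exists l1 l2 k,
  constructible S l1 /\ constructible S l2 /\ constructible S k /\
  0 < l1^2 + l2^2 /\ l1 * p1 + l2 * p2 = k.

Lemma line_circle_constructible S r p1 p2 :
  constructible S r -> on_constructible_line S p1 p2 -> p1^2 + p2^2 = r^2 ->
  constructible S p1 /\ constructible S p2.
Proof.
  intros Cr (l1 & l2 & k & Cl1 & Cl2 & Ck & Hl & Hline) Hp.
  set (g := l2 * p1 - l1 * p2).
  assert (Cg : constructible S g).
  { apply constructible_of_sqr.
    replace (g^2) with ((l1^2 + l2^2) * r^2 - k^2) by (rewrite <- Hline, <- Hp; unfold g; ring).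
    constructible. }
  split.
  - replace p1 with ((k * l1 + g * l2) / (l1^2 + l2^2))
      by (rewrite <- Hline; unfold g; field; lra).
    constructible; lra.
  - replace p2 with ((k * l2 - g * l1) / (l1^2 + l2^2))
      by (rewrite <- Hline; unfold g; field; lra).
    constructible; lra.
Qed.

Lemma div_sqrt_sum_sqr_bound d w : 0 < d^2 + w^2 -> -1 <= d / sqrt (d^2 + w^2) <= 1.
Proof.
  intro H. pose proof (sqrt_lt_R0 _ H) as HN.
  pose proof (sqrt_sqrt (d^2 + w^2) ltac:(lra)) as HS.
  set (N := sqrt (d^2 + w^2)) in *.
  assert (Rabs d <= N).
  { apply Rsqr_incr_0_var; [|lra]. rewrite <- Rsqr_abs. unfold Rsqr. nra. }
  pose proof (Rle_abs d). pose proof (Rle_abs (- d)). rewrite Rabs_Ropp in *.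
  split; apply (Rmult_le_reg_r N); try lra; unfold Rdiv; rewrite Rmult_assoc, Rinv_l; lra.
Qed.

Lemma upper_circle_cross_le x y xs ys :
  x^2 + y^2 = 1 -> xs^2 + ys^2 = 1 -> 0 <= y -> 0 <= ys -> xs <= x -> xs * y <= x * ys.
Proof.
  intros H1 H2 H3 H4 H5.
  destruct (Rle_dec xs 0); destruct (Rle_dec 0 x).
  - nra.
  - assert (x^2 <= xs^2) by nra. assert (ys <= y) by nra. nra.
  - assert (xs^2 <= x^2) by nra. assert (y <= ys) by nra. nra.
  - lra.
Qed.

(* [d / sqrt (d^2 + w^2)] is an increasing function of the cotangent [d / |w|]. *)
Lemma cot_ge_of_cos_ge d w ds ws : 0 < d^2 + w^2 -> ws <> 0 ->
  d / sqrt (d^2 + w^2) >= ds / sqrt (ds^2 + ws^2) -> d * Rabs ws >= ds * Rabs w.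
Proof.
  intros H Hws Hcos.
  assert (Hs : 0 < ds^2 + ws^2) by (apply sum_sqr_pos; tauto).
  pose proof (sqrt_lt_R0 _ H) as HN. pose proof (sqrt_lt_R0 _ Hs) as HNs.
  pose proof (sqrt_sqrt (d^2 + w^2) ltac:(lra)) as HS.
  pose proof (sqrt_sqrt (ds^2 + ws^2) ltac:(lra)) as HSs.
  set (N := sqrt (d^2 + w^2)) in *. set (Ns := sqrt (ds^2 + ws^2)) in *.
  pose proof (pow2_abs w) as Aw. pose proof (pow2_abs ws) as Aws.
  pose proof (Rabs_pos w). pose proof (Rabs_pos ws).
  assert (U : ds / Ns * (Rabs w / N) <= d / N * (Rabs ws / Ns)).
  { apply upper_circle_cross_le; try lra.
    - field_simplify; [rewrite Aw, <- HS; field|]; lra.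
    - field_simplify; [rewrite Aws, <- HSs; field|]; lra.
    - apply Rdiv_le_0_compat; lra.
    - apply Rdiv_le_0_compat; lra. }
  replace (ds * Rabs w) with (ds / Ns * (Rabs w / N) * (N * Ns)) by (field; lra).
  replace (d * Rabs ws) with (d / N * (Rabs ws / Ns) * (N * Ns)) by (field; lra).
  apply Rle_ge, Rmult_le_compat_r; nra.
Qed.

Lemma circle_polar r q1 q2 : 0 < r -> q1^2 + q2^2 = r^2 ->
  exists t, 0 <= t <= 2 * PI /\ q1 = r * cos t /\ q2 = r * sin t.
Proof.
  intros Hr Hq.
  set (x := q1 / r).
  assert (Hx : -1 <= x <= 1).
  { assert (x^2 <= 1).
    { unfold x. replace ((q1 / r)^2) with (q1^2 / r^2) by (field; lra).
      apply (Rmult_le_reg_r (r^2)); [nra|]. field_simplify; nra || lra. }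
    nra. }
  pose proof (acos_bound x) as Hb. pose proof PI_RGT_0.
  pose proof (cos_acos x Hx) as Hc. pose proof (sin_acos x Hx) as Hs.
  assert (Hsq : 1 - x² = Rsqr (q2 / r)).
  { unfold Rsqr, x. replace 1 with ((q1^2 + q2^2) / r^2) by (rewrite Hq; field; lra). field. lra. }
  rewrite Hsq, sqrt_Rsqr_abs in Hs.
  destruct (Rle_dec 0 q2).
  - exists (acos x). split; [lra|]. split.
    + rewrite Hc. unfold x; field; lra.
    + rewrite Hs, Rabs_pos_eq by (apply Rdiv_le_0_compat; lra). field; lra.
  - exists (2 * PI - acos x). split; [lra|]. split.
    + rewrite cos_minus, cos_2PI, sin_2PI, Hc. unfold x; field; lra.
    + rewrite sin_minus, cos_2PI, sin_2PI, Hs, Rabs_left.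
      * field; lra.
      * unfold Rdiv. apply Rmult_neg_pos; [lra|apply Rinv_0_lt_compat; lra].
Qed.

Lemma acos_antitone x y : -1 <= x -> x <= y -> y <= 1 -> acos y <= acos x.
Proof.
  intros H1 H2 H3.
  destruct (Rle_dec (acos y) (acos x)) as [|Hn]; auto. exfalso.
  pose proof (acos_bound x). pose proof (acos_bound y).
  assert (Hc : cos (acos y) < cos (acos x)) by (apply cos_decreasing_1; lra).
  rewrite !cos_acos in Hc by lra. lra.
Qed.

Lemma cross_eq0_of_parallel g1 g2 p1 p2 n1 n2 : 0 < g1^2 + g2^2 ->
  p1 * g2 - p2 * g1 = 0 -> n1 * g2 - n2 * g1 = 0 -> p1 * n2 - p2 * n1 = 0.
Proof.
  intros Hg Hp Hn.
  assert (E : (p1 * n2 - p2 * n1) * (g1^2 + g2^2) = 0).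
  { replace ((p1 * n2 - p2 * n1) * (g1^2 + g2^2))
      with ((p1 * g2 - p2 * g1) * (n1 * g1 + n2 * g2) - (p1 * g1 + p2 * g2) * (n1 * g2 - n2 * g1))
      by ring.
    rewrite Hp, Hn; ring. }
  apply Rmult_integral in E as [E|E]; lra.
Qed.

Lemma dot_eq_sqr_of_parallel g1 g2 p1 p2 x1 x2 : 0 < g1^2 + g2^2 ->
  p1 * g2 - p2 * g1 = 0 -> x1 * g1 + x2 * g2 = p1 * g1 + p2 * g2 ->
  p1 * x1 + p2 * x2 = p1^2 + p2^2.
Proof.
  intros Hg Hp Hx.
  apply (Rmult_eq_reg_r (g1^2 + g2^2)); [|lra].
  replace ((p1 * x1 + p2 * x2) * (g1^2 + g2^2))
    with ((p1 * g1 + p2 * g2) * (x1 * g1 + x2 * g2) + (p1 * g2 - p2 * g1) * (x1 * g2 - x2 * g1))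
    by ring.
  replace ((p1^2 + p2^2) * (g1^2 + g2^2))
    with ((p1 * g1 + p2 * g2)^2 + (p1 * g2 - p2 * g1)^2) by ring.
  rewrite Hx, Hp; ring.
Qed.

Section Configuration.

Variables a1 a2 b1 b2 r : R.
Hypothesis r_pos : 0 < r.
Hypothesis a_outside : r^2 < a1^2 + a2^2.
Hypothesis b_outside : r^2 < b1^2 + b2^2.

Definition dot_at q1 q2 := (a1 - q1) * (b1 - q1) + (a2 - q2) * (b2 - q2).
Definition cross_at q1 q2 := (a1 - q1) * (b2 - q2) - (a2 - q2) * (b1 - q1).
Definition cos_at q1 q2 :=
  dot_at q1 q2 / (sqrt ((q1 - a1)^2 + (q2 - a2)^2) * sqrt ((q1 - b1)^2 + (q2 - b2)^2)).

(* [normal p = 2 (cross_at p) p - grad (cross_at p * dot_at - dot_at p * cross_at) p], and the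
   gradient is proportional to that of the cotangent [dot_at / cross_at] at [p]; so the
   Lagrange condition for the cotangent on the circle at [p] reads [p // normal p]. *)
Definition normal1 p1 p2 := cross_at p1 p2 * (a1 + b1) - dot_at p1 p2 * (b2 - a2).
Definition normal2 p1 p2 := cross_at p1 p2 * (a2 + b2) - dot_at p1 p2 * (a1 - b1).

Lemma lagrange_identity q1 q2 :
  dot_at q1 q2 ^ 2 + cross_at q1 q2 ^ 2 =
  ((q1 - a1)^2 + (q2 - a2)^2) * ((q1 - b1)^2 + (q2 - b2)^2).
Proof. unfold dot_at, cross_at. ring. Qed.

Lemma cross_at_affine q1 q2 :
  cross_at q1 q2 = (a1 * b2 - a2 * b1) - ((b2 - a2) * q1 + (a1 - b1) * q2).
Proof. unfold cross_at. ring. Qed.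

Lemma cos_at_eq q1 q2 : q1^2 + q2^2 = r^2 ->
  cos_at q1 q2 = dot_at q1 q2 / sqrt (dot_at q1 q2 ^ 2 + cross_at q1 q2 ^ 2).
Proof.
  intros Hq.
  pose proof (sqr_dist_pos_of_circle _ _ _ _ _ Hq a_outside).
  pose proof (sqr_dist_pos_of_circle _ _ _ _ _ Hq b_outside).
  unfold cos_at. rewrite lagrange_identity, sqrt_mult_alt; lra.
Qed.

Lemma cos_at_bound q1 q2 : q1^2 + q2^2 = r^2 -> -1 <= cos_at q1 q2 <= 1.
Proof.
  intros Hq. rewrite cos_at_eq by assumption.
  apply div_sqrt_sum_sqr_bound. rewrite lagrange_identity.
  pose proof (sqr_dist_pos_of_circle _ _ _ _ _ Hq a_outside).
  pose proof (sqr_dist_pos_of_circle _ _ _ _ _ Hq b_outside).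
  nra.
Qed.

Lemma cos_at_on_circle_continuous t :
  continuity_pt (fun t => - cos_at (r * cos t) (r * sin t)) t.
Proof.
  assert (Hon : (r * cos t)^2 + (r * sin t)^2 = r^2).
  { pose proof (sin2_cos2 t). unfold Rsqr in *. nra. }
  pose proof (sqr_dist_pos_of_circle _ _ _ _ _ Hon a_outside).
  pose proof (sqr_dist_pos_of_circle _ _ _ _ _ Hon b_outside).
  apply continuity_pt_filterlim.
  assert (HD : ex_derive (fun t => - cos_at (r * cos t) (r * sin t)) t).
  { unfold cos_at, dot_at. auto_derive. repeat split; try lra.
    apply Rgt_not_eq, Rmult_lt_0_compat; apply sqrt_lt_R0; lra. }
  exact (ex_derive_continuous _ _ HD).
Qed.

Lemma cos_at_min_on_circle : exists p1 p2, p1^2 + p2^2 = r^2 /\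
  forall q1 q2, q1^2 + q2^2 = r^2 -> cos_at p1 p2 <= cos_at q1 q2.
Proof.
  pose proof PI_RGT_0.
  destruct (continuity_ab_maj (fun t => - cos_at (r * cos t) (r * sin t)) 0 (2 * PI))
    as [M [HM _]]; [lra|intros; apply cos_at_on_circle_continuous|].
  exists (r * cos M), (r * sin M). split.
  - pose proof (sin2_cos2 M). unfold Rsqr in *. nra.
  - intros q1 q2 Hq. destruct (circle_polar r q1 q2 r_pos Hq) as [t [Ht [-> ->]]].
    specialize (HM t Ht). simpl in HM. lra.
Qed.

Lemma critical_point_normal p1 p2 :
  p1^2 + p2^2 = r^2 -> cross_at p1 p2 <> 0 ->
  (forall q1 q2, q1^2 + q2^2 = r^2 ->
     dot_at q1 q2 * Rabs (cross_at p1 p2) >= dot_at p1 p2 * Rabs (cross_at q1 q2)) ->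
  p1 * normal2 p1 p2 - p2 * normal1 p1 p2 = 0.
Proof.
  intros Hp Hws Hmin.
  set (ws := cross_at p1 p2) in *. set (ds := dot_at p1 p2) in *.
  set (m := a1 * b2 - a2 * b1).
  set (c := p1 * normal2 p1 p2 - p2 * normal1 p1 p2).
  set (X := ws * (p1^2 + p2^2 + a1 * b1 + a2 * b2) - ds * m).
  set (c2 := p1 * (a1 - b1) - p2 * (b2 - a2)).
  (* [q t] is [p] rotated by the angle [2 atan t]. *)
  set (q1 t := ((1 - t^2) * p1 - 2 * t * p2) / (1 + t^2)).
  set (q2 t := ((1 - t^2) * p2 + 2 * t * p1) / (1 + t^2)).
  assert (Hden : forall t, 0 < 1 + t^2) by (intro t; pose proof (pow2_ge_0 t); lra).
  assert (Hq : forall t, q1 t ^ 2 + q2 t ^ 2 = r^2).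
  { intro t. rewrite <- Hp. unfold q1, q2. field. specialize (Hden t). lra. }
  assert (Hcross : forall t, (1 + t^2) * (ws * cross_at (q1 t) (q2 t)) =
     ws^2 + (- 2 * ws * c2) * t + (ws * (2 * m - ws)) * t^2).
  { intro t. unfold q1, q2, c2, m, ws, cross_at. field. specialize (Hden t). lra. }
  assert (Hdot : forall t,
     (1 + t^2) * (ws * (dot_at (q1 t) (q2 t) * ws - ds * cross_at (q1 t) (q2 t))) =
     2 * (t * (ws * X * t - ws * c))).
  { intro t. unfold q1, q2, c, X, m, normal1, normal2, ws, ds, dot_at, cross_at.
    field. specialize (Hden t). lra. }
  destruct (quadratic_pos_near_0 (ws^2) (- 2 * ws * c2) (ws * (2 * m - ws)))
    as [delta [Hdelta Hpos]].
  { pose proof (sum_sqr_pos ws 0 (or_introl Hws)). lra. }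
  assert (Hwsc : ws * c = 0).
  { apply (stationary_of_nonneg_near_0 (ws * X) _ delta Hdelta). intros t Ht.
    specialize (Hden t). specialize (Hpos t Ht). rewrite <- Hcross in Hpos.
    assert (Hsame : 0 < ws * cross_at (q1 t) (q2 t)) by nra.
    pose proof (mul_sub_nonneg_of_same_sign _ _ _ _ Hsame (Hmin _ _ (Hq t))) as HK.
    assert (HK' := Rmult_le_pos _ _ (Rlt_le _ _ Hden) HK).
    rewrite Hdot in HK'. lra. }
  apply Rmult_integral in Hwsc as [|]; [contradiction|assumption].
Qed.

Variable S : R -> Prop.
Hypotheses (Ca1 : constructible S a1) (Ca2 : constructible S a2)
  (Cb1 : constructible S b1) (Cb2 : constructible S b2) (Cr : constructible S r).

(* The line is the polar of the point [x] of the line [AB] with equal powers with respect to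
   the circle and to every circle through [A] and [B]; when [|a| = |b|] that point is at
   infinity and the line is the diameter perpendicular to [AB]. *)
Lemma critical_point_on_constructible_line p1 p2 :
  p1^2 + p2^2 = r^2 -> cross_at p1 p2 <> 0 ->
  p1 * normal2 p1 p2 - p2 * normal1 p1 p2 = 0 -> on_constructible_line S p1 p2.
Proof.
  intros Hp Hws Hc.
  set (ws := cross_at p1 p2) in *. set (ds := dot_at p1 p2).
  set (G1 := normal1 p1 p2) in *. set (G2 := normal2 p1 p2) in *.
  set (E0 := r^2 + a1 * b1 + a2 * b2). set (m := a1 * b2 - a2 * b1).
  set (s1 := a1 + b1). set (s2 := a2 + b2). set (n1 := b2 - a2). set (n2 := a1 - b1).
  assert (HG : 0 < G1^2 + G2^2).
  { apply sum_sqr_pos.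
    destruct (Req_dec G1 0) as [e1|]; [|left; assumption].
    destruct (Req_dec G2 0) as [e2|]; [|right; assumption]. exfalso.
    assert (Id : ws * (a1^2 + a2^2 - r^2) = (a1 - p1) * G1 + (a2 - p2) * G2)
      by (rewrite <- Hp; unfold G1, G2, normal1, normal2, ws, dot_at, cross_at; ring).
    rewrite e1, e2 in Id.
    assert (E : ws * (a1^2 + a2^2 - r^2) = 0) by lra.
    apply Rmult_integral in E as [|]; [contradiction|lra]. }
  assert (HpG : p1 * G1 + p2 * G2 = ws * E0 - ds * m)
    by (unfold G1, G2, normal1, normal2, ws, ds, E0, m, dot_at, cross_at; rewrite <- Hp; ring).
  destruct (Req_dec (a1^2 + a2^2) (b1^2 + b2^2)) as [Hab|Hab].
  - assert (Hn : 0 < n1^2 + n2^2).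
    { apply sum_sqr_pos.
      destruct (Req_dec n1 0); [|left; assumption].
      destruct (Req_dec n2 0); [|right; assumption]. exfalso. apply Hws.
      unfold ws, cross_at. unfold n1, n2 in *.
      replace b1 with a1 by lra. replace b2 with a2 by lra. ring. }
    assert (Hpn : p1 * n2 - p2 * n1 = 0).
    { apply (cross_eq0_of_parallel G1 G2); [assumption|assumption|].
      replace (n1 * G2 - n2 * G1) with (ws * ((b1^2 + b2^2) - (a1^2 + a2^2)))
        by (unfold G1, G2, normal1, normal2, n1, n2, ws; ring).
      rewrite Hab; ring. }
    exists n2, (- n1), 0. unfold n1, n2 in *.
    repeat split; [constructible..|lra|lra].
  - set (det := s1 * n2 - s2 * n1).
    assert (Hdet : det <> 0) by (unfold det, s1, s2, n1, n2; intro; apply Hab; lra).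
    set (x1 := (E0 * n2 - m * s2) / det). set (x2 := (s1 * m - n1 * E0) / det).
    assert (Hpx : p1 * x1 + p2 * x2 = r^2).
    { rewrite <- Hp. apply (dot_eq_sqr_of_parallel G1 G2); [assumption|assumption|].
      rewrite HpG. unfold x1, x2, G1, G2, normal1, normal2. fold ws ds s1 s2 n1 n2.
      field_simplify_eq; [|exact Hdet]. unfold det. ring. }
    exists x1, x2, (r^2). repeat split.
    + unfold x1, det, E0, m, s1, s2, n1, n2 in *. constructible. exact Hdet.
    + unfold x2, det, E0, m, s1, s2, n1, n2 in *. constructible. exact Hdet.
    + constructible.
    + apply sum_sqr_pos.
      destruct (Req_dec x1 0) as [e1|]; [|left; assumption].
      destruct (Req_dec x2 0) as [e2|]; [|right; assumption].
      rewrite e1, e2 in Hpx. nra.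
    + rewrite <- Hpx; ring.
Qed.

Lemma cos_at_argmin_on_constructible_line p1 p2 :
  a1 <> b1 \/ a2 <> b2 -> p1^2 + p2^2 = r^2 ->
  (forall q1 q2, q1^2 + q2^2 = r^2 -> cos_at p1 p2 <= cos_at q1 q2) ->
  on_constructible_line S p1 p2.
Proof.
  intros Hab Hp Hmin.
  destruct (Req_dec (cross_at p1 p2) 0) as [Hw|Hw].
  - exists (b2 - a2), (a1 - b1), (a1 * b2 - a2 * b1).
    rewrite cross_at_affine in Hw.
    repeat split; [constructible..| |lra].
    apply sum_sqr_pos. destruct Hab; [right|left]; lra.
  - apply critical_point_on_constructible_line; [assumption..|].
    apply critical_point_normal; [assumption..|].
    intros q1 q2 Hq. apply cot_ge_of_cos_ge; [|assumption|].
    + rewrite lagrange_identity.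
      pose proof (sqr_dist_pos_of_circle _ _ _ _ _ Hq a_outside).
      pose proof (sqr_dist_pos_of_circle _ _ _ _ _ Hq b_outside). nra.
    + rewrite <- !cos_at_eq by assumption. apply Rle_ge, Hmin, Hq.
Qed.

Lemma cos_at_diag q1 q2 : a1 = b1 -> a2 = b2 -> q1^2 + q2^2 = r^2 -> cos_at q1 q2 = 1.
Proof.
  intros E1 E2 Hq.
  pose proof (sqr_dist_pos_of_circle _ _ _ _ _ Hq a_outside).
  unfold cos_at, dot_at. rewrite <- E1, <- E2, sqrt_sqrt by lra.
  field. lra.
Qed.

Lemma cos_at_constructible_argmin : exists p1 p2,
  p1^2 + p2^2 = r^2 /\
  (forall q1 q2, q1^2 + q2^2 = r^2 -> cos_at p1 p2 <= cos_at q1 q2) /\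
  constructible S p1 /\ constructible S p2.
Proof.
  assert (Hcase : (a1 = b1 /\ a2 = b2) \/ (a1 <> b1 \/ a2 <> b2))
    by (destruct (Req_dec a1 b1), (Req_dec a2 b2); tauto).
  destruct Hcase as [[E1 E2]|Hab].
  - exists r, 0. repeat split; [ring| |assumption|constructible].
    intros q1 q2 Hq. rewrite !cos_at_diag by (assumption || ring). lra.
  - destruct cos_at_min_on_circle as (p1 & p2 & Hp & Hmin).
    exists p1, p2. split; [|split]; [assumption..|].
    apply (line_circle_constructible S r); [assumption| |assumption].
    apply cos_at_argmin_on_constructible_line; assumption.
Qed.

End Configuration.

Lemma angle_eq_acos_cos_at (A Q B P : point) : angle A Q B =
  acos (cos_at (fst A - fst P) (snd A - snd P) (fst B - fst P) (snd B - snd P)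
               (fst Q - fst P) (snd Q - snd P)).
Proof.
  unfold angle, cos_at, dot_at, edist. f_equal. f_equal; [ring|].
  f_equal; f_equal; ring.
Qed.

Lemma edist_eq_iff (P Q : point) r : 0 < r ->
  edist P Q = r <-> (fst Q - fst P)^2 + (snd Q - snd P)^2 = r^2.
Proof.
  intros Hr. unfold edist.
  replace ((fst P - fst Q)^2 + (snd P - snd Q)^2)
    with ((fst Q - fst P)^2 + (snd Q - snd P)^2) by ring.
  split; intros H.
  - rewrite <- H, pow2_sqrt; [reflexivity|].
    apply Rplus_le_le_0_compat; apply pow2_ge_0.
  - rewrite H. apply sqrt_pow2. lra.
Qed.

Lemma sqr_lt_of_edist_gt (A P : point) r : 0 < r -> edist A P > r ->
  r^2 < (fst A - fst P)^2 + (snd A - snd P)^2.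
Proof.
  intros Hr H. apply Rnot_le_lt. intros Hle.
  apply sqrt_le_1_alt in Hle. rewrite (sqrt_pow2 r) in Hle by lra.
  unfold edist in H. lra.
Qed.

Theorem proposition2 (A B P : point) (r : R) :
  0 < r -> edist A P > r -> edist B P > r ->
  exists Ps : point,
    edist P Ps = r /\
    (forall Q : point, edist P Q = r -> angle A Q B <= angle A Ps B) /\
    constructible
      (fun x => x = fst A \/ x = snd A \/ x = fst B \/ x = snd B \/
                x = fst P \/ x = snd P \/ x = r) (fst Ps) /\
    constructible
      (fun x => x = fst A \/ x = snd A \/ x = fst B \/ x = snd B \/
                x = fst P \/ x = snd P \/ x = r) (snd Ps).
Proof.
  intros Hr HA HB.
  set (S := fun x => x = fst A \/ x = snd A \/ x = fst B \/ x = snd B \/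
                     x = fst P \/ x = snd P \/ x = r).
  assert (CA1 : constructible S (fst A)) by (apply cst_base; unfold S; tauto).
  assert (CA2 : constructible S (snd A)) by (apply cst_base; unfold S; tauto).
  assert (CB1 : constructible S (fst B)) by (apply cst_base; unfold S; tauto).
  assert (CB2 : constructible S (snd B)) by (apply cst_base; unfold S; tauto).
  assert (CP1 : constructible S (fst P)) by (apply cst_base; unfold S; tauto).
  assert (CP2 : constructible S (snd P)) by (apply cst_base; unfold S; tauto).
  assert (Cr : constructible S r) by (apply cst_base; unfold S; tauto).
  pose proof (sqr_lt_of_edist_gt A P r Hr HA) as Ha.
  pose proof (sqr_lt_of_edist_gt B P r Hr HB) as Hb.
  destruct (cos_at_constructible_argmin _ _ _ _ _ Hr Ha Hb S)
    as (p1 & p2 & Hp & Hmin & Cp1 & Cp2); [constructible..|].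
  exists (fst P + p1, snd P + p2); cbn [fst snd].
  split; [|split; [|split]]; [|intros Q HQ|constructible..].
  - apply edist_eq_iff; [assumption|]. cbn [fst snd]. rewrite <- Hp. ring.
  - apply edist_eq_iff in HQ; [|assumption].
    rewrite !(angle_eq_acos_cos_at _ _ _ P). cbn [fst snd].
    replace (fst P + p1 - fst P) with p1 by ring.
    replace (snd P + p2 - snd P) with p2 by ring.
    pose proof (cos_at_bound _ _ _ _ _ Ha Hb _ _ HQ).
    pose proof (cos_at_bound _ _ _ _ _ Ha Hb _ _ Hp).
    pose proof (Hmin _ _ HQ).
    apply acos_antitone; lra.
Qed.
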